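(* Let $h \ge 1$, $N_H \ge 1$, $f \ge 1$ be integers and let $R \in (0,1]$. Let the state matrix $(\mathbf{F}_1, \ldots, \mathbf{F}_h)$ of an IBF with $h$ hash functions, $N = h N_H$ cells and $f$ stored elements be chosen uniformly at random from $\mathcal{S}_{N_H,f}^h$, and let $Y$ be the number of elements extracted by the extraction process. Then the probability that the extraction fails to achieve extraction rate $R$, i.e. $\Pr(Y/f < R)$, satisfies $$\Pr\left(\frac{Y}{f} < R\right) \le 1 - \sum_{e = \lceil R f \rceil}^{f} \frac{\Theta(N_H, f, h, e)}{N_H^{h f}}.$$ Equivalently, for every integer $0 \le y \le f$, $\Pr(Y \ge y) \ge \sum_{e=y}^{f} \Theta(N_H, f, h, e)/N_H^{hf}$.
   Context: For integers $n, m \ge 0$, let $\mathcal{S}_{n,m}$ denote the set of all $n \times m$ binary matrices in which every column has Hamming weight exactly one (so $|\mathcal{S}_{n,m}| = n^m$; $\mathcal{S}_{n,0}$ consists of the single empty matrix, and $\mathcal{S}_{0,m} = \emptyset$ for $m \ge 1$). A binary matrix is called a stopping matrix if none of its rows has Hamming weight exactly one. Let $z(n, m)$ denote the number of matrices in $\mathcal{S}_{n,m}$ that are stopping matrices. The state matrix of an IBF with $h$ hash functions, $N = hN_H$ cells (partitioned into $h$ sub-filters of $N_H$ cells, the $i$-th hash function mapping into the $i$-th sub-filter) and $f$ inserted elements $x_1,\dots,x_f$ is the $h$-tuple $(\mathbf{F}_1,\dots,\mathbf{F}_h)$ with $\mathbf{F}_i \in \mathcal{S}_{N_H,f}$, where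 $\mathbf{F}_i$ has a $1$ in row $r$, column $j$ iff the $i$-th hash function maps $x_j$ to cell $r$ of the $i$-th sub-filter. Extraction (peeling) process: columns are removed simultaneously from all blocks; while there is some $i \in [h]$ and some row of $\mathbf{F}_i$ whose restriction to the not-yet-removed columns has Hamming weight exactly one, remove (extract) the column containing that unique $1$; stop when no block has such a row. The number of extracted elements is the number of removed columns (independent of the order of removals). For $e \in \mathbb{N}$, $\mathcal{T}_e$ is the set of vectors $\mathbf{b} \in \mathbb{N}^h$ with all entries in $\{0, \ldots, e\}$, and $\xi(\mathbf{b}) = \sum_i b_i$. The function $\Psi$ is defined by $\Psi(0, \mathbf{0}) = 1$, $\Psi(0, \mathbf{b}) = 0$ for $\mathbf{b} \ne \mathbf{0}$, and for $e \ge 1$: $\Psi(e, \mathbf{b}) = \prod_{i=1}^{h} \binom{e}{b_i} - \sum_{j=0}^{e-1} \binom{e}{j} \Psi(j, \mathbf{b})$. Finally $$\Theta(N_H, f, h, e) = \binom{f}{e} \sum_{\mathbf{b} \in \mathcal{T}_e \,:\, \xi(\mathbf{b}) \ge e} \left( \Psi(e, \mathbf{b}) \prod_{i=1}^{h} \left[ \binom{N_H}{b_i}\, b_i!\, z(N_H - b_i, f - b_i) \right] \right).$$ *)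

From HB Require Import structures.
From mathcomp Require Import all_boot all_order all_algebra.
From mathcomp Require Import reals.
Set Implicit Arguments. Unset Strict Implicit. Unset Printing Implicit Defensive.
Import Order.TTheory GRing.Theory Num.Theory.

Definition colw n m (M : 'M[bool]_(n, m)) (j : 'I_m) : nat := #|[set i | M i j]|.
Definition roww n m (M : 'M[bool]_(n, m)) (i : 'I_n) : nat := #|[set j | M i j]|.

Definition inS n m (M : 'M[bool]_(n, m)) : bool := [forall j, colw M j == 1].

Definition stopping n m (M : 'M[bool]_(n, m)) : bool := [forall i, roww M i != 1].

Definition z (n m : nat) : nat := #|[set M : 'M[bool]_(n, m) | inS M && stopping M]|.

Definition state h NH f := {ffun 'I_h -> 'M[bool]_(NH, f)}.
Definition inSh h NH f (F : state h NH f) : bool := [forall i, inS (F i)].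

(* Peeling: C is the set of not-yet-removed columns. Column j is extractable
   if some row r of some block F_i, restricted to C, has weight exactly one
   with its unique 1 in column j. *)
Definition extractable h NH f (F : state h NH f) (C : {set 'I_f}) (j : 'I_f) : bool :=
  (j \in C) &&
  [exists i : 'I_h, exists r : 'I_NH,
     F i r j && (#|[set j' in C | F i r j']| == 1)].

Definition peel_step h NH f (F : state h NH f) (C : {set 'I_f}) : {set 'I_f} :=
  if [pick j | extractable F C j] is Some j then C :\ j else C.

(* At most f removals are possible, so f iterations reach the end state. *)
Definition remaining h NH f (F : state h NH f) : {set 'I_f} :=
  iter f (peel_step F) setT.

Definition extracted h NH f (F : state h NH f) : nat := f - #|remaining F|.

(* Psi, defined literally by its recursion (strong recursion via the list of
   values Psi(0,b), ..., Psi(n,b)); b is given as a sequence of length h. *)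
Definition psi_next (b : seq nat) (e : nat) (s : seq int) : int :=
  (\prod_(bi <- b) ('C(e, bi))%:Z - \sum_(j < e) ('C(e, j))%:Z * nth 0 s j)%R.

Fixpoint psi_seq (b : seq nat) (n : nat) : seq int :=
  match n with
  | 0 => [:: if all (fun bi => bi == 0) b then 1%R else 0%R]
  | n'.+1 => let s := psi_seq b n' in rcons s (psi_next b n'.+1 s)
  end.

Definition Psi (e : nat) (b : seq nat) : int := nth 0%R (psi_seq b e) e.

(* Theta(N_H, f, h, e); T_e = vectors b in N^h with entries in {0..e},
   represented as {ffun 'I_h -> 'I_e.+1}. *)
Definition Theta (NH f h e : nat) : int :=
  (('C(f, e))%:Z *
   \sum_(b : {ffun 'I_h -> 'I_e.+1} | (e <= \sum_(i < h) (b i : nat))%N)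
     (Psi e [seq (b i : nat) | i <- enum 'I_h] *
      \prod_(i < h) ('C(NH, b i) * (b i)`! * z (NH - b i) (f - b i))%:Z))%R.

From HB Require Import structures.
From mathcomp Require Import all_boot all_order all_algebra.
From mathcomp Require Import reals.
Import Order.TTheory GRing.Theory Num.Theory.
Set Implicit Arguments. Unset Strict Implicit. Unset Printing Implicit Defensive.

(* The number Y of extracted elements is at least the number of columns that
   are extractable in the very first round (section Peeling).  Encoding every
   block of S_{NH,f} as a map g : [f] -> [NH], a column is initially
   extractable iff it is "lonely" for some g_i, i.e. alone in its fibre; write
   sing g for the set of lonely points of g.  We then count the h-tuples of
   maps whose lonely sets have a union of size e:
   - the maps g with sing g = B number NH^_|B| * z(NH - |B|, f - |B|): g is
     injective on B, and off B it is a stopping map avoiding g(B);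
   - the families (B_i) with |B_i| = b_i and union exactly E number
     Psi(|E|, b), by inverting prod_i C(|E|, b_i) = sum_{U <= E} cov(U, b).
   Hence this count dominates Theta(NH, f, h, e), which only drops
   nonnegative terms.  Summing over e >= ceil(R f) bounds the number of
   states reaching rate R from below; dividing by |S_{NH,f}^h| = NH^(h f)
   gives the theorem. *)

Section Peeling.
Variables (h NH f : nat) (F : state h NH f).

(* Removing other columns cannot destroy a weight-one row whose unique 1 lies
   in a column that is still present. *)
Lemma extractable_full (C : {set 'I_f}) (j : 'I_f) :
  extractable F setT j -> j \in C -> extractable F C j.
Proof.
case/andP=> _ /existsP[i /existsP[r /andP[Frj /cards1P[x Ex]]]] jC.
have jx : j = x by apply/set1P; rewrite -Ex !inE Frj.
rewrite /extractable jC; apply/existsP; exists i; apply/existsP; exists r.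
rewrite Frj; apply/cards1P; exists j; apply/setP=> k; rewrite !inE.
apply/andP/eqP=> [[_ Frk] | ->]; last by rewrite jC Frj.
by apply/set1P; rewrite jx -Ex !inE Frk.
Qed.

Lemma peel_invariant (k : nat) :
  (#|iter k (peel_step F) setT| + k == f) ||
  [forall j, ~~ extractable F (iter k (peel_step F) setT) j].
Proof.
elim: k => [|k IH]; first by rewrite addn0 cardsT card_ord eqxx.
rewrite iterS; set C := iter k _ _; rewrite /peel_step.
case: pickP => [j ej | stuck]; last by apply/orP; right; apply/forallP=> j; rewrite stuck.
case/orP: IH => [/eqP removed | /forallP/(_ j)]; last by rewrite ej.
have /andP[jC _] := ej.
by rewrite (cardsD1 j C) jC add1n addSn in removed; rewrite addnS removed eqxx.
Qed.

Lemma initially_extractable_removed (j : 'I_f) :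
  extractable F setT j -> j \notin remaining F.
Proof.
move=> ej; rewrite /remaining.
case/orP: (peel_invariant f) => [/eqP all_removed | /forallP stuck].
  have : #|iter f (peel_step F) setT| == 0 by rewrite -(eqn_add2r f) all_removed.
  by rewrite cards_eq0 => /eqP ->; rewrite inE.
by apply/negP=> jC; move: (stuck j); rewrite (extractable_full ej jC).
Qed.

Lemma initially_extractable_le_extracted :
  #|[set j | extractable F setT j]| <= extracted F.
Proof.
have -> : extracted F = #|~: remaining F| by rewrite cardsCs setCK card_ord.
apply: subset_leq_card; apply/subsetP=> j; rewrite !inE.
exact: initially_extractable_removed.
Qed.

End Peeling.

Section Fibres.
Variables (T Y : finType).

Definition fib (g : {ffun T -> Y}) (y : Y) : nat := #|[set x | g x == y]|.
Definition stopping_map (g : {ffun T -> Y}) : bool := [forall y, fib g y != 1].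
Definition sing (g : {ffun T -> Y}) : {set T} := [set x | fib g (g x) == 1].

End Fibres.

(* A matrix of S_{n,m} is the incidence matrix of a map from columns to rows;
   we use this encoding throughout. *)
Definition mat (n m : nat) (g : {ffun 'I_m -> 'I_n}) : 'M[bool]_(n, m) :=
  \matrix_(r, j) (g j == r).

Lemma mat_inj (n m : nat) : injective (@mat n m).
Proof.
move=> g1 g2 e; apply/ffunP=> j; apply/eqP.
by have := congr1 (fun M : 'M[bool]_(n, m) => M (g2 j) j) e; rewrite !mxE eqxx.
Qed.

Lemma inS_mat (n m : nat) (g : {ffun 'I_m -> 'I_n}) : inS (mat g).
Proof.
apply/forallP=> j; apply/cards1P; exists (g j).
by apply/setP=> r; rewrite !inE mxE eq_sym.
Qed.

Lemma inS_matP (n m : nat) (M : 'M[bool]_(n, m)) : inS M -> exists g, M = mat g.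
Proof.
move=> /forallP colw1.
have /fin_all_exists[u Hu] : forall j, exists r, [set i | M i j] = [set r].
  by move=> j; apply/cards1P; exact: colw1.
exists [ffun j => u j]; apply/matrixP=> r j; rewrite mxE ffunE.
have : (r \in [set i | M i j]) = (r \in [set u j]) by rewrite Hu.
by rewrite !inE eq_sym.
Qed.

Lemma card_inS (n m : nat) (P : pred 'M[bool]_(n, m)) :
  #|[set M | inS M && P M]| = #|[set g : {ffun 'I_m -> 'I_n} | P (mat g)]|.
Proof.
rewrite -(card_imset _ (@mat_inj n m)); apply: eq_card=> M; rewrite !inE.
apply/andP/imsetP=> [[/inS_matP[g ->] Pg] | [g]]; first by exists g; rewrite ?inE.
by rewrite inE => Pg ->; rewrite inS_mat.
Qed.

Lemma roww_mat (n m : nat) (g : {ffun 'I_m -> 'I_n}) (r : 'I_n) : roww (mat g) r = fib g r.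
Proof. by apply: eq_card=> j; rewrite !inE mxE. Qed.

Lemma z_stopping (n m : nat) : z n m = #|[set g : {ffun 'I_m -> 'I_n} | stopping_map g]|.
Proof.
rewrite /z card_inS; apply: eq_card=> g; rewrite !inE.
by apply/eq_forallb=> r; rewrite roww_mat.
Qed.

Definition stmat (h NH f : nat) (G : {ffun 'I_h -> {ffun 'I_f -> 'I_NH}}) : state h NH f :=
  [ffun i => mat (G i)].

Lemma stmat_inj (h NH f : nat) : injective (@stmat h NH f).
Proof.
move=> G1 G2 e; apply/ffunP=> i; apply: (@mat_inj NH f).
by have := congr1 (fun F : state h NH f => F i) e; rewrite !ffunE.
Qed.

Lemma card_inSh (h NH f : nat) (P : pred (state h NH f)) :
  #|[set F | inSh F && P F]| =
  #|[set G : {ffun 'I_h -> {ffun 'I_f -> 'I_NH}} | P (stmat G)]|.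
Proof.
rewrite -(card_imset _ (@stmat_inj h NH f)); apply: eq_card=> F; rewrite !inE.
apply/andP/imsetP=> [[/forallP blocks PF] | [G]].
  have /fin_all_exists[u Hu] : forall i, exists g, F i = mat g.
    by move=> i; apply: inS_matP.
  have eF : F = stmat [ffun i => u i] by apply/ffunP=> i; rewrite !ffunE.
  by exists [ffun i => u i]; rewrite // inE -eF.
rewrite inE => PG ->; split=> //; apply/forallP=> i; rewrite ffunE; exact: inS_mat.
Qed.

Lemma extractable_stmat (h NH f : nat) (G : {ffun 'I_h -> {ffun 'I_f -> 'I_NH}})
    (j : 'I_f) :
  extractable (stmat G) setT j = (j \in \bigcup_i sing (G i)).
Proof.
have fibE i r : #|[set j' in setT | stmat G i r j']| = fib (G i) r.
  by apply: eq_card=> k; rewrite !inE ffunE mxE.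
rewrite /extractable in_setT; apply/existsP/bigcupP=> [[i /existsP[r]] | [i _]].
  rewrite fibE ffunE mxE => /andP[/eqP <- sing_j]; exists i; rewrite ?inE //.
by rewrite inE => sing_j; exists i; apply/existsP; exists (G i j); rewrite fibE ffunE mxE eqxx.
Qed.

Lemma card_set_sum (X : finType) (P : pred X) : #|[set x | P x]| = \sum_x (P x : nat).
Proof. by rewrite -sum1_card big_mkcond; apply: eq_bigr=> x _; rewrite inE; case: (P x). Qed.

Lemma card_sig_set (T : finType) (Pr P : pred T) :
  #|[set d : {x | Pr x} | P (val d)]| = #|[set x | Pr x && P x]|.
Proof.
rewrite -(card_imset _ val_inj); apply: eq_card=> x; rewrite inE.
apply/imsetP/andP=> [[d] | [Prx Px]]; first by rewrite inE => Pd ->; split=> //; exact: valP.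
by exists (Sub x Prx); rewrite ?SubK // inE SubK.
Qed.

(* The stopping maps A -> Y with values in Z are the stopping maps into Z,
   counted by z(|Z|, |A|) after relabelling A and Z by ordinals. *)
Section StoppingInto.
Variables (A Y : finType) (Z : {set Y}).

Definition relabel (g : {ffun 'I_#|A| -> 'I_#|Z|}) : {ffun A -> Y} :=
  [ffun x => @enum_val Y (mem Z) (g (enum_rank x))].

Lemma relabel_inj : injective relabel.
Proof.
move=> g1 g2 e; apply/ffunP=> i; apply: (@enum_val_inj Y (mem Z)).
by have := congr1 (fun p : {ffun A -> Y} => p (enum_val i)) e; rewrite !ffunE enum_valK.
Qed.

Lemma fib_relabel (g : {ffun 'I_#|A| -> 'I_#|Z|}) (r : 'I_#|Z|) :
  fib (relabel g) (@enum_val Y (mem Z) r) = fib g r.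
Proof.
rewrite /fib -(card_imset _ (@enum_rank_inj A)); apply: eq_card=> i.
apply/imsetP/idP=> [[x] | ]; first by rewrite !inE ffunE (inj_eq (@enum_val_inj _ _)) => e ->.
by rewrite inE => e; exists (enum_val i); rewrite ?enum_valK // inE ffunE enum_valK (eqP e).
Qed.

Lemma card_stopping_into :
  #|[set p : {ffun A -> Y} | [forall x, p x \in Z] && stopping_map p]| = z #|Z| #|A|.
Proof.
rewrite z_stopping -(card_imset _ relabel_inj); apply: eq_card=> p; rewrite inE.
apply/idP/imsetP=> [/andP[/forallP pZ /forallP stop] | [g]].
  have /fin_all_exists[u Hu] : forall i : 'I_#|A|, exists r : 'I_#|Z|,
      @enum_val Y (mem Z) r = p (enum_val i).
    by move=> i; exists (enum_rank_in (pZ (enum_val i)) (p (enum_val i))); rewrite enum_rankK_in.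
  have ep : p = relabel [ffun i => u i] by apply/ffunP=> x; rewrite !ffunE Hu enum_rankK.
  by exists [ffun i => u i]; rewrite // inE; apply/forallP=> r; rewrite -fib_relabel -ep.
rewrite inE => /forallP stop ->; apply/andP; split.
  by apply/forallP=> x; rewrite ffunE enum_valP.
apply/forallP=> y; case yZ: (y \in Z); first by rewrite -(enum_rankK_in yZ yZ) fib_relabel.
apply/negP=> /cards1P[x /setP/(_ x)]; rewrite !inE eqxx ffunE => /eqP gx.
by move: (enum_valP (g (enum_rank x))); rewrite gx yZ.
Qed.

End StoppingInto.

(* Maps g : T -> Y whose set of lonely points is exactly B: g is injective on
   B, g maps the complement of B away from g(B), and g restricted to the
   complement of B is stopping.  Splitting g along B turns this into a
   product count: |Y|^_|B| injections times z(|Y|-|B|, |T|-|B|). *)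
Section SingletonSet.
Variables (T Y : finType) (B : {set T}).

Lemma fib_split (g : {ffun T -> Y}) (y : Y) :
  fib g y = #|[set x in B | g x == y]| + #|[set x in ~: B | g x == y]|.
Proof. by rewrite /fib -(cardsID B); congr (_ + _); apply: eq_card=> x; rewrite !inE andbC. Qed.

Definition sing_cond (g : {ffun T -> Y}) : Prop :=
  [/\ {in B &, injective g},
      forall x x', x \notin B -> x' \in B -> g x != g x'
    & forall y, #|[set x in ~: B | g x == y]| != 1].

Lemma sing_eq_cond (g : {ffun T -> Y}) : sing g = B -> sing_cond g.
Proof.
move=> singB.
have alone x x' : x \in B -> g x' = g x -> x' = x.
  rewrite -singB inE /fib => /cards1P[x0 fibx] e.
  have : x' \in [set x1 | g x1 == g x] by rewrite inE e.
  have : x \in [set x1 | g x1 == g x] by rewrite inE.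
  by rewrite fibx => /set1P -> /set1P ->.
split=> [x1 x2 _ x2B e | x x' xB x'B | y].
- exact: alone x2B e.
- by apply/eqP=> e; rewrite (alone _ _ x'B e) x'B in xB.
- apply/negP=> /cards1P[x0 fibx0].
  have : x0 \in [set x in ~: B | g x == y] by rewrite fibx0 inE.
  rewrite !inE => /andP[x0B /eqP gx0].
  have : x0 \notin sing g by rewrite singB.
  rewrite inE fib_split gx0 fibx0 cards1 addn1 eqSS -lt0n => /card_gt0P[x1].
  rewrite inE => /andP[x1B /eqP gx1].
  by rewrite (alone _ _ x1B (etrans gx0 (esym gx1))) x1B in x0B.
Qed.

Lemma cond_sing_eq (g : {ffun T -> Y}) : sing_cond g -> sing g = B.
Proof.
case=> injB sep stopB; apply/setP=> x; rewrite inE fib_split.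
have [xB | xB] := boolP (x \in B).
  have in1 : [set x' in B | g x' == g x] = [set x].
    apply/setP=> x'; rewrite !inE.
    apply/andP/eqP=> [[x'B /eqP e] | ->]; [exact: injB | by rewrite xB].
  have -> : #|[set x' in ~: B | g x' == g x]| = 0.
    apply/eqP; rewrite cards_eq0; apply/eqP/setP=> x'; rewrite !inE.
    by apply/negP=> /andP[x'B /eqP e]; move: (sep _ _ x'B xB); rewrite e eqxx.
  by rewrite in1 cards1.
have -> : #|[set x' in B | g x' == g x]| = 0.
  apply/eqP; rewrite cards_eq0; apply/eqP/setP=> x'; rewrite !inE.
  by apply/negP=> /andP[x'B /eqP e]; move: (sep _ _ xB x'B); rewrite e eqxx.
by rewrite add0n (negbTE (stopB _)).
Qed.

Lemma sing_eqP (g : {ffun T -> Y}) : reflect (sing_cond g) (sing g == B).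
Proof. exact: (iffP eqP (@sing_eq_cond g) (@cond_sing_eq g)). Qed.

Local Notation D := {x : T | x \in B}.
Local Notation Dc := {x : T | x \in ~: B}.

Definition split_map (g : {ffun T -> Y}) : {ffun D -> Y} * {ffun Dc -> Y} :=
  ([ffun d => g (val d)], [ffun d => g (val d)]).

Definition split_cond (p : {ffun D -> Y} * {ffun Dc -> Y}) : bool :=
  [&& injectiveb p.1, [forall d, p.2 d \notin codom p.1] & stopping_map p.2].

Lemma card_D : #|{: D}| = #|B|.
Proof. by rewrite card_sig; apply: eq_card=> x; rewrite !inE. Qed.

Lemma split_map_inj : injective split_map.
Proof.
move=> g1 g2 e; apply/ffunP=> x; have [xB | xB] := boolP (x \in B).
  have := congr1 (fun p : {ffun D -> Y} * {ffun Dc -> Y} => p.1 (Sub x xB)) e.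
  by rewrite /= !ffunE SubK.
have xB' : x \in ~: B by rewrite inE.
have := congr1 (fun p : {ffun D -> Y} * {ffun Dc -> Y} => p.2 (Sub x xB')) e.
by rewrite /= !ffunE SubK.
Qed.

Lemma split_map_surj (p : {ffun D -> Y} * {ffun Dc -> Y}) : exists g, p = split_map g.
Proof.
case: p => p1 p2.
have /fin_all_exists[u Hu] : forall x, exists y : Y,
    (forall xB : x \in B, y = p1 (Sub x xB)) /\ (forall xB : x \in ~: B, y = p2 (Sub x xB)).
  move=> x; case/orP: (orbN (x \in B)) => xB.
    exists (p1 (Sub x xB)); split=> [xB' | xB']; first by congr (p1 _); exact: val_inj.
    by exfalso; move: xB'; rewrite inE xB.
  have xB' : x \in ~: B by rewrite inE.
  exists (p2 (Sub x xB')); split=> [xB'' | xB'']; last by congr (p2 _); exact: val_inj.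
  by exfalso; move: xB'' xB => ->.
exists [ffun x => u x]; congr (_, _); apply/ffunP=> d; rewrite !ffunE.
  by case: (Hu (val d)) => /(_ (valP d)) -> _; congr (p1 _); apply: val_inj; rewrite SubK.
by case: (Hu (val d)) => _ /(_ (valP d)) ->; congr (p2 _); apply: val_inj; rewrite SubK.
Qed.

Lemma split_condP (g : {ffun T -> Y}) : reflect (sing_cond g) (split_cond (split_map g)).
Proof.
have fibE y : fib [ffun d : Dc => g (val d)] y = #|[set x in ~: B | g x == y]|.
  rewrite -(card_sig_set (fun x => x \in ~: B) (fun x => g x == y)).
  by apply: eq_card=> d; rewrite !inE ffunE.
apply: (iffP and3P) => [[/injectiveP inj /forallP avoid /forallP stop] | [injB sep stopB]].
  split=> [x1 x2 x1B x2B e | x x' xB x'B | y].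
  - have := inj (Sub x1 x1B) (Sub x2 x2B); rewrite !ffunE !SubK => /(_ e).
    by move/(congr1 val); rewrite !SubK.
  - have xB' : x \in ~: B by rewrite inE.
    apply/eqP=> e; move: (avoid (Sub x xB')); rewrite ffunE SubK => /negP; apply.
    by apply/codomP; exists (Sub x' x'B); rewrite ffunE SubK.
  - by rewrite -fibE; exact: stop.
rewrite /split_map /=; split.
- apply/injectiveP=> d1 d2; rewrite !ffunE => e.
  by apply: val_inj; exact: injB (valP d1) (valP d2) e.
- apply/forallP=> d; apply/codomP=> -[d']; rewrite !ffunE => e.
  have := valP d; rewrite inE => dB.
  by move: (sep _ _ dB (valP d')); rewrite e eqxx.
- by apply/forallP=> y; rewrite fibE.
Qed.

Lemma card_sing_split :
  #|[set g : {ffun T -> Y} | sing g == B]| = #|[set p | split_cond p]|.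
Proof.
rewrite -(card_imset _ split_map_inj); apply: eq_card=> p; rewrite inE.
have [g ->] := split_map_surj p.
rewrite (mem_imset _ _ split_map_inj) inE.
exact: sameP (sing_eqP g) (split_condP g).
Qed.

(* Given an injection p1 on B, the admissible maps on the complement are the
   stopping maps into the complement of the image of p1. *)
Lemma card_split_out (p1 : {ffun D -> Y}) : injectiveb p1 ->
  #|[set p2 : {ffun Dc -> Y} | split_cond (p1, p2)]| = z (#|Y| - #|B|) (#|T| - #|B|).
Proof.
move=> inj1b; have /injectiveP inj1 := inj1b.
have cardDc : #|{: Dc}| = #|T| - #|B|.
  rewrite card_sig (_ : #|[pred x | x \in ~: B]| = #|~: B|); first by rewrite cardsCs setCK.
  by apply: eq_card=> x; rewrite !inE.
have cardZ : #|Y| - #|B| = #|[set y | y \notin codom p1]|.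
  rewrite -card_D -(card_codom inj1) -[X in _ - X]cardsE -(cardsC [set:: codom p1]) addKn.
  by apply: eq_card=> y; rewrite !inE.
rewrite cardZ -cardDc -card_stopping_into; apply: eq_card=> p2; rewrite !inE /split_cond /=.
rewrite inj1b /=; congr (_ && _); apply: eq_forallb=> d; by rewrite inE.
Qed.

Definition sing_count (k : nat) : nat := #|Y| ^_ k * z (#|Y| - k) (#|T| - k).

Lemma card_sing_eq : #|[set g : {ffun T -> Y} | sing g == B]| = sing_count #|B|.
Proof.
rewrite /sing_count.
have -> : #|Y| ^_ #|B| = #|[set p1 : {ffun D -> Y} | injectiveb p1]|.
  by rewrite card_inj_ffuns card_D.
rewrite card_sing_split !card_set_sum big_distrl /=.
rewrite -(pair_bigA _ (fun p1 p2 => (split_cond (p1, p2) : nat))); apply: eq_bigr=> p1 _.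
have [inj1 | ninj1] := boolP (injectiveb p1).
  by rewrite mul1n -(card_split_out inj1) card_set_sum.
by rewrite mul0n big1 // => p2 _; rewrite /split_cond /= (negbTE ninj1).
Qed.

End SingletonSet.

Lemma size_psi_seq (b : seq nat) (n : nat) : size (psi_seq b n) = n.+1.
Proof. by elim: n => [|n IH] //=; rewrite size_rcons IH. Qed.

Lemma nth_psi_seq (b : seq nat) (n j : nat) : j <= n -> nth 0%R (psi_seq b n) j = Psi j b.
Proof.
elim: n => [|n IH]; first by rewrite leqn0 => /eqP ->.
rewrite leq_eqVlt => /orP[/eqP -> // | ltjn].
by rewrite /= nth_rcons size_psi_seq ltjn IH.
Qed.

Lemma prod_bin0 (b : seq nat) :
  (\prod_(bi <- b) ('C(0, bi))%:Z)%R = if all (fun bi => bi == 0) b then 1%R else 0%R.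
Proof.
elim: b => [|a b IH]; first by rewrite big_nil.
by rewrite big_cons IH bin0n /=; case: (a == 0); rewrite ?mul1r ?mul0r.
Qed.

Lemma Psi_rec (b : seq nat) (e : nat) : Psi e b =
  (\prod_(bi <- b) ('C(e, bi))%:Z - \sum_(j < e) ('C(e, j))%:Z * Psi j b)%R.
Proof.
case: e => [|n]; first by rewrite big_ord0 subr0 prod_bin0.
rewrite /Psi /= nth_rcons size_psi_seq ltnn eqxx /psi_next; congr (_ - _)%R.
by apply: eq_bigr=> j _; rewrite nth_psi_seq // -ltnS.
Qed.

Lemma Posz_sum (J : Type) (r : seq J) (P : pred J) (F : J -> nat) :
  Posz (\sum_(j <- r | P j) F j) = (\sum_(j <- r | P j) Posz (F j))%R.
Proof. by rewrite -natz natr_sum; apply: eq_bigr=> j _; rewrite natz. Qed.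

Lemma Posz_prod (J : Type) (r : seq J) (F : J -> nat) :
  Posz (\prod_(j <- r) F j) = (\prod_(j <- r) Posz (F j))%R.
Proof. by rewrite -natz natr_prod; apply: eq_bigr=> j _; rewrite natz. Qed.

Lemma prod_bool (I : finType) (P : pred I) : \prod_i (P i : nat) = [forall i, P i].
Proof.
have [/forallP allP | /forallPn[i notPi]] := boolP [forall i, P i].
  by apply: big1=> i _; rewrite allP.
by rewrite (bigD1 i) //= (negbTE notPi).
Qed.

(* Choosing each B_i inside E and
   sorting by the union gives prod_i C(|E|, bn i) = sum_{U <= E} cov U bn;
   inverting this relation along |E| shows that cov E bn = Psi(|E|, bn). *)
Section Covers.
Variables (I T : finType).

Definition cov (E : {set T}) (bn : I -> nat) : nat :=
  #|[set Bs : {ffun I -> {set T}} |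
      (\bigcup_i Bs i == E) && [forall i, #|Bs i| == bn i]]|.

Lemma prod_binomial_cov (E : {set T}) (bn : I -> nat) :
  \prod_i 'C(#|E|, bn i) = \sum_(U : {set T} | U \subset E) cov U bn.
Proof.
transitivity (\prod_i \sum_(A : {set T}) ((A \subset E) && (#|A| == bn i) : nat)).
  by apply: eq_bigr=> i _; rewrite -cards_draws card_set_sum.
rewrite bigA_distr_bigA /=; under eq_bigr => Bs _ do rewrite prod_bool.
transitivity (\sum_(Bs : {ffun I -> {set T}} |
   [forall i, (Bs i \subset E) && (#|Bs i| == bn i)]) 1).
  by rewrite [RHS]big_mkcond; apply: eq_bigr=> Bs _; case: [forall i, _].
rewrite (partition_big (fun Bs : {ffun I -> {set T}} => \bigcup_i Bs i)
                       (fun U => U \subset E)) /=; last first.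
  by move=> Bs /forallP sub; apply/bigcupsP=> i _; case/andP: (sub i).
apply: eq_bigr=> U UE; rewrite /cov -sum1_card; apply: eq_bigl=> Bs; rewrite inE.
have [unionU | ] := eqVneq (\bigcup_i Bs i) U; rewrite ?andbF //= andbT.
by apply: eq_forallb=> i; rewrite (subset_trans _ UE) // -unionU (bigcup_sup i).
Qed.

Lemma sum_subsets_by_size (E : {set T}) (F : {set T} -> nat) :
  \sum_(U : {set T} | U \subset E) F U =
  \sum_(j < #|E|) \sum_(U : {set T} | (U \subset E) && (#|U| == j)) F U + F E.
Proof.
rewrite (partition_big (fun U : {set T} => (inord #|U| : 'I_#|E|.+1)) xpredT) //=.
rewrite big_ord_recr /=; congr (_ + _).
  apply: eq_bigr=> j _; apply: eq_bigl=> U.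
  have [UE | //] := boolP (U \subset E).
  by rewrite -val_eqE /= inordK ?ltnS ?subset_leq_card.
rewrite (big_pred1 E) // => U.
have [UE | nUE] := boolP (U \subset E); last first.
  by apply/esym/negbTE; apply: contraNneq nUE => ->.
rewrite -val_eqE /= inordK ?ltnS ?subset_leq_card //.
by rewrite eqEcard UE /= eqn_leq subset_leq_card.
Qed.

Lemma cov_Psi (bn : I -> nat) (E : {set T}) :
  Posz (cov E bn) = Psi #|E| [seq bn i | i <- enum I].
Proof.
move: {2}#|E| (erefl #|E|) => e; elim/ltn_ind: e E => e IH E cardE.
have := prod_binomial_cov E bn; rewrite sum_subsets_by_size cardE => binE.
rewrite Psi_rec big_map big_enum /= -Posz_prod binE PoszD.
suff -> : Posz (\sum_(j < e) \sum_(U : {set T} | (U \subset E) && (#|U| == j)) cov U bn) =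
          (\sum_(j < e) ('C(e, j))%:Z * Psi j [seq bn i | i <- enum I])%R.
  by rewrite addrAC subrr add0r.
rewrite Posz_sum; apply: eq_bigr=> j _.
have -> : 'C(e, j) = #|[set U : {set T} | U \subset E & #|U| == j]|.
  by rewrite cards_draws cardE.
rewrite -sum1_card Posz_sum mulr_suml Posz_sum.
apply: eq_big => [U | U]; first by rewrite inE.
by move=> /andP[UE /eqP cardU]; rewrite mul1r (IH j) ?cardU.
Qed.

End Covers.

Section TupleCount.
Variables (I T Y : finType).

(* Tuples are sorted by their family of lonely sets; the maps are then
   chosen independently. *)
Lemma card_union_sing (E : {set T}) :
  #|[set G : {ffun I -> {ffun T -> Y}} | \bigcup_i sing (G i) == E]| =
  \sum_(Bs : {ffun I -> {set T}} | \bigcup_i Bs i == E) \prod_i sing_count T Y #|Bs i|.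
Proof.
rewrite -sum1_card (partition_big (fun G : {ffun I -> {ffun T -> Y}} => [ffun i => sing (G i)])
  (fun Bs : {ffun I -> {set T}} => \bigcup_i Bs i == E)) /=; last first.
  by move=> G; rewrite inE => /eqP <-; apply/eqP/eq_bigr=> i _; rewrite ffunE.
apply: eq_bigr=> Bs /eqP unionE.
under [RHS]eq_bigr => i _ do rewrite -card_sing_eq card_set_sum.
rewrite bigA_distr_bigA /=; under [RHS]eq_bigr => G _ do rewrite prod_bool.
rewrite -card_set_sum sum1_card; apply: eq_card=> G; rewrite !inE.
apply/andP/forallP=> [[_ /eqP <- i] | singBs]; first by rewrite ffunE.
have eBs : [ffun i => sing (G i)] = Bs by apply/ffunP=> i; rewrite ffunE (eqP (singBs i)).
split; last by rewrite eBs.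
by rewrite inE -unionE -eBs; apply/eqP/eq_bigr=> i _; rewrite ffunE.
Qed.

(* Families with union E are then sorted by their vector of sizes. *)
Lemma sum_families_by_sizes (k : nat) (E : {set T}) : #|E| = k ->
  \sum_(Bs : {ffun I -> {set T}} | \bigcup_i Bs i == E) \prod_i sing_count T Y #|Bs i| =
  \sum_(b : {ffun I -> 'I_k.+1}) cov E (fun i => (b i : nat)) * \prod_i sing_count T Y (b i).
Proof.
move=> <-.
rewrite (partition_big (fun Bs : {ffun I -> {set T}} =>
   [ffun i => (inord #|Bs i| : 'I_#|E|.+1)]) xpredT) //=.
apply: eq_bigr=> b _.
have sizesE Bs : \bigcup_i Bs i == E ->
    ([ffun i => (inord #|Bs i| : 'I_#|E|.+1)] == b) = [forall i, #|Bs i| == b i].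
  move=> /eqP unionE; apply/eqP/forallP=> [<- i | sizes].
    by rewrite ffunE inordK // ltnS -unionE subset_leq_card // (bigcup_sup i).
  by apply/ffunP=> i; rewrite ffunE (eqP (sizes i)) inord_val.
rewrite (eq_bigr (fun _ => \prod_i sing_count T Y (b i))); last first.
  move=> Bs /andP[unionE]; rewrite sizesE // => /forallP sizes.
  by apply: eq_bigr=> i _; rewrite (eqP (sizes i)).
rewrite sum_nat_const; congr (_ * _); apply: eq_card=> Bs; rewrite unfold_in inE /=.
by have [unionE | //] := boolP (\bigcup_i Bs i == E); rewrite sizesE.
Qed.

Lemma card_union_size (e : nat) :
  #|[set G : {ffun I -> {ffun T -> Y}} | #|\bigcup_i sing (G i)| == e]| =
  \sum_(E : {set T} | #|E| == e) \sum_(b : {ffun I -> 'I_e.+1})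
      cov E (fun i => (b i : nat)) * \prod_i sing_count T Y (b i).
Proof.
rewrite -sum1_card (partition_big (fun G : {ffun I -> {ffun T -> Y}} => \bigcup_i sing (G i))
   (fun E : {set T} => #|E| == e)) /=; last by move=> G; rewrite inE.
apply: eq_bigr=> E /eqP cardE; rewrite -(sum_families_by_sizes cardE) -card_union_sing.
rewrite -sum1_card; apply: eq_bigl=> G; rewrite !inE.
by have [-> | ] := eqVneq (\bigcup_i sing (G i)) E; rewrite ?andbF // cardE eqxx.
Qed.

End TupleCount.

(* Theta(N_H, f, h, e) is at most the number of h-tuples of maps whose
   lonely sets have a union of size e: the count of [card_union_size]
   sums C(f, e) * Psi(e, b) * prod_i NH^_(b_i) z(NH - b_i, f - b_i) over all
   b, and Theta keeps only the (nonnegative) terms with sum_i b_i >= e. *)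
Lemma Theta_le_card (h NH f e : nat) :
  (Theta NH f h e <=
   Posz #|[set G : {ffun 'I_h -> {ffun 'I_f -> 'I_NH}} | #|\bigcup_i sing (G i)| == e]|)%R.
Proof.
rewrite card_union_size Posz_sum /Theta -[f in 'C(f, e)](card_ord f) -card_draws.
rewrite -sum1_card Posz_sum mulr_suml (eq_bigl (fun E : {set 'I_f} => #|E| == e)); last first.
  by move=> E; rewrite inE.
apply: ler_sum=> E /eqP cardE; rewrite mul1r Posz_sum big_mkcond /=.
apply: ler_sum=> b _; case: ifP => _ //.
have := cov_Psi (fun i => (b i : nat)) E; rewrite cardE => <-.
rewrite PoszM -Posz_prod (eq_bigr (fun i => sing_count 'I_f 'I_NH (b i))) //.
by move=> i _; rewrite /sing_count !card_ord bin_ffact.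
Qed.

Lemma card_by_union_size (h NH f : nat) (Q : pred nat) :
  #|[set G : {ffun 'I_h -> {ffun 'I_f -> 'I_NH}} | Q #|\bigcup_i sing (G i)|]| =
  \sum_(e < f.+1 | Q e)
     #|[set G : {ffun 'I_h -> {ffun 'I_f -> 'I_NH}} | #|\bigcup_i sing (G i)| == e]|.
Proof.
have small (G : {ffun 'I_h -> {ffun 'I_f -> 'I_NH}}) : #|\bigcup_i sing (G i)| < f.+1.
  by rewrite ltnS -[f in _ <= f]card_ord max_card.
rewrite -sum1_card (partition_big (fun G : {ffun 'I_h -> {ffun 'I_f -> 'I_NH}} =>
    (inord #|\bigcup_i sing (G i)| : 'I_f.+1)) (fun e : 'I_f.+1 => Q e)) /=; last first.
  by move=> G; rewrite inE inordK.
apply: eq_bigr=> e Qe; rewrite -sum1_card; apply: eq_bigl=> G; rewrite !inE.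
rewrite -val_eqE /= inordK //.
by have [-> | ] := eqVneq #|\bigcup_i sing (G i)| e; rewrite ?andbF ?Qe.
Qed.

Local Open Scope ring_scope.

Lemma sum_Theta_le_success (h NH f : nat) (y : int) :
  \sum_(e < f.+1 | y <= (e : nat)%:Z) Theta NH f h e <=
  Posz #|[set F : state h NH f | inSh F && (y <= (extracted F)%:Z)]|.
Proof.
have sum_le : \sum_(e < f.+1 | y <= (e : nat)%:Z) Theta NH f h e <=
    Posz (\sum_(e < f.+1 | (y <= (e : nat)%:Z)%R)
      #|[set G : {ffun 'I_h -> {ffun 'I_f -> 'I_NH}} | #|\bigcup_i sing (G i)| == e]|)%N.
  by rewrite Posz_sum; apply: ler_sum=> e _; exact: Theta_le_card.
apply: le_trans sum_le _.
rewrite -(card_by_union_size h NH f (fun e : nat => y <= e%:Z)) card_inSh lez_nat.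
apply: subset_leq_card; apply/subsetP=> G; rewrite !inE => /le_trans; apply.
rewrite lez_nat; apply: leq_trans (initially_extractable_le_extracted (stmat G)).
by apply/eq_leq/eq_card=> j; rewrite !inE extractable_stmat.
Qed.

Lemma card_states (h NH f : nat) : #|[set F : state h NH f | inSh F]| = (NH ^ (h * f))%N.
Proof.
have -> : #|[set F : state h NH f | inSh F]| = #|[set F : state h NH f | inSh F && true]|.
  by apply: eq_card=> F; rewrite !inE andbT.
rewrite card_inSh (eq_card (B := {ffun 'I_h -> {ffun 'I_f -> 'I_NH}})) => [|G].
  by rewrite !card_ffun !card_ord -expnM mulnC.
by rewrite inE.
Qed.

Lemma rate_reached (Rt : realType) (R : Rt) (f k : nat) : (0 < f)%N ->
  ~~ (k%:R / f%:R < R) = (Num.ceil (R * f%:R) <= k%:Z).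
Proof. by move=> f_gt0; rewrite -leNgt ler_pdivlMr ?ltr0n // Num.Theory.ceil_le_int. Qed.

Theorem theorem2 (Rt : realType) (h NH f : nat) (R : Rt) :
  (1 <= h)%N -> (1 <= NH)%N -> (1 <= f)%N -> 0 < R -> R <= 1 ->
  (#|[set F : state h NH f | inSh F && ((extracted F)%:R / f%:R < R)]|%:R
     / #|[set F : state h NH f | inSh F]|%:R : Rt)
  <= 1 - \sum_(e < f.+1 | Num.ceil (R * f%:R) <= (e : nat)%:Z)
            (Theta NH f h e)%:~R / (NH ^ (h * f))%:R.
Proof.
move=> _ NH_gt0 f_gt0 _ _; set y := Num.ceil (R * f%:R).
set fail := #|[set F : state h NH f | inSh F && _]|.
set success := #|[set F : state h NH f | inSh F && (y <= (extracted F)%:Z)]|.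
(* A state either fails to reach rate R or yields at least ceil(R f). *)
have fail_success : (fail + success = NH ^ (h * f))%N.
  rewrite -(card_states h NH f) -(cardsID [set F | (extracted F)%:R / f%:R < R]).
  by congr (_ + _)%N; apply: eq_card=> F; rewrite !inE ?rate_reached // andbC.
have N_gt0 : (0 : Rt) < (NH ^ (h * f))%:R by rewrite ltr0n expn_gt0 NH_gt0.
(* After clearing the denominator the claim reads sum Theta <= success. *)
rewrite card_states -mulr_suml -rmorph_sum.
rewrite -[X in X - _](@divff _ (NH ^ (h * f))%:R) ?gt_eqF // -mulrBl ler_pM2r ?invr_gt0 //.
have -> : (fail%:R : Rt) = (Posz fail)%:~R by [].
have -> : ((NH ^ (h * f))%:R : Rt) = (Posz (NH ^ (h * f)))%:~R by [].
rewrite -rmorphB ler_int -fail_success PoszD -addrA lerDl subr_ge0.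
exact: sum_Theta_le_success.
Qed.
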